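(* Let $(X,\mathsf{d}_X)$ be a compact metric space, $\mathfrak{A}$ a finite-dimensional C*-algebra, and $\mu$ a state of $C(X,\mathfrak{A})$. Let $\|\cdot\|_{\mathsf{n}}$ and $\|\cdot\|_{\mathsf{m}}$ be norms on $\mathfrak{A}$ (over $\mathbb{R}$ or $\mathbb{C}$) and $q,p\in\{C(X),\mathbb{C},\mu\}$. Then the seminorms $\mathsf{L}^{(\mathsf{n}),q}_{\mathsf{d}_X}$ and $\mathsf{L}^{(\mathsf{m}),p}_{\mathsf{d}_X}$ are equivalent on the self-adjoint part of $C(X,\mathfrak{A})$, i.e. there exist $c,C>0$ with $c\,\mathsf{L}^{(\mathsf{n}),q}_{\mathsf{d}_X}(a)\le\mathsf{L}^{(\mathsf{m}),p}_{\mathsf{d}_X}(a)\le C\,\mathsf{L}^{(\mathsf{n}),q}_{\mathsf{d}_X}(a)$ for all self-adjoint $a$. Furthermore, the map $\mathfrak{c}_X:C(X)\to C(X,\mathbb{C}1_{\mathfrak{A}})$, $\mathfrak{c}_X(f)(x)=f(x)1_{\mathfrak{A}}$, is bi-Lipschitz with respect to $\mathsf{L}_{\mathsf{d}_X}$ and any $\mathsf{L}^{(\mathsf{n}),q}_{\mathsf{d}_X}$: there exist $c',C'>0$ with $c'\mathsf{L}_{\mathsf{d}_X}(f)\le\mathsf{L}^{(\mathsf{n}),q}_{\mathsf{d}_X}(\mathfrak{c}_X(f))\le C'\mathsf{L}_{\mathsf{d}_X}(f)$ for all real-valued $f\in C(X)$.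
   Context: $C(X,\mathfrak{A})$: continuous $\mathfrak{A}$-valued functions, pointwise operations, supremum norm; $C(X,\mathbb{C}1_{\mathfrak{A}})$ the $\mathbb{C}1_{\mathfrak{A}}$-valued ones. For a norm $\|\cdot\|_{\mathsf{n}}$ on $\mathfrak{A}$: $l^{(\mathsf{n})}_{\mathsf{d}_X}(a)=\sup_{x\ne y}\|a(x)-a(y)\|_{\mathsf{n}}/\mathsf{d}_X(x,y)$; $\mathsf{L}^{(\mathsf{n}),C(X)}_{\mathsf{d}_X}(a)=\max\{l^{(\mathsf{n})}_{\mathsf{d}_X}(a),\inf_{b\in C(X,\mathbb{C}1_{\mathfrak{A}})}\|a-b\|\}$, $\mathsf{L}^{(\mathsf{n}),\mathbb{C}}_{\mathsf{d}_X}(a)=\max\{l^{(\mathsf{n})}_{\mathsf{d}_X}(a),\inf_{\lambda\in\mathbb{C}}\|a-\lambda1\|\}$, $\mathsf{L}^{(\mathsf{n}),\mu}_{\mathsf{d}_X}(a)=\max\{l^{(\mathsf{n})}_{\mathsf{d}_X}(a),\|a-\mu(a)1\|\}$ (supremum norms). $\mathsf{L}_{\mathsf{d}_X}(f)=\sup_{x\ne y}|f(x)-f(y)|/\mathsf{d}_X(x,y)$. *)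

From Stdlib Require List.
From HB Require Import structures.
From mathcomp Require Import all_boot all_order all_algebra all_field.
From mathcomp Require Import all_classical all_reals.
From mathcomp Require Import constructive_ereal ereal.
From mathcomp.real_closed Require Import complex.

Set Implicit Arguments.
Unset Strict Implicit.
Unset Printing Implicit Defensive.
Import Order.TTheory GRing.Theory Num.Theory.
Local Open Scope ring_scope.
Local Open Scope classical_set_scope.

Section Defs.
Variable R : realType.
Local Notation C := (R[i]).

Record is_metric (X : Type) (d : X -> X -> R) : Prop := {
  metric_ge0 : forall x y, 0 <= d x y;
  metric_eq0 : forall x y, d x y = 0 <-> x = y;
  metric_sym : forall x y, d x y = d y x;
  metric_triangle : forall x y z, d x z <= d x y + d y z }.

Definition d_open (X : Type) (d : X -> X -> R) (U : X -> Prop) :=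
  forall x, U x -> exists2 r : R, 0 < r & forall y, d x y < r -> U y.

Definition d_compact (X : Type) (d : X -> X -> R) :=
  forall (I : Type) (U : I -> X -> Prop),
    (forall i, d_open d (U i)) -> (forall x, exists i, U i x) ->
    exists s : list I, forall x, exists i, List.In i s /\ U i x.

Definition compact_metric_space (X : Type) (d : X -> X -> R) :=
  is_metric d /\ d_compact d.

(* A : falgType C is a finite-dimensional unital C-algebra; star is the
   involution and cn the C*-norm (completeness is automatic in finite dim). *)
Record is_cstar (A : falgType C) (star : A -> A) (cn : A -> R) : Prop := {
  star_add : forall a b, star (a + b) = star a + star b;
  star_scale : forall (z : C) a, star (z *: a) = conjc z *: star a;
  star_mul : forall a b, star (a * b) = star b * star a;
  star_invol : forall a, star (star a) = a;
  cn_eq0 : forall a, cn a = 0 -> a = 0;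
  cn_triangle : forall a b, cn (a + b) <= cn a + cn b;
  cn_scale : forall (z : C) a, (cn (z *: a))%:C%C = `|z| * (cn a)%:C%C;
  cn_submul : forall a b, cn (a * b) <= cn a * cn b;
  cn_cstar : forall a, cn (star a * a) = cn a ^+ 2 }.

(* a norm on A regarded as a real vector space (this includes the norms on A
   as a complex vector space) *)
Record is_real_norm (A : falgType C) (N : A -> R) : Prop := {
  rnorm_eq0 : forall a, N a = 0 -> a = 0;
  rnorm_triangle : forall a b, N (a + b) <= N a + N b;
  rnorm_scale : forall (r : R) a, N (r%:C%C *: a) = `|r| * N a }.

Variables (X : Type) (d : X -> X -> R) (A : falgType C)
  (star : A -> A) (cn : A -> R).

Definition cont_XA (a : X -> A) :=
  forall x (eps : R), 0 < eps ->
    exists2 del : R, 0 < del & forall y, d x y < del -> cn (a y - a x) < eps.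

Definition cont_XR (f : X -> R) :=
  forall x (eps : R), 0 < eps ->
    exists2 del : R, 0 < del & forall y, d x y < del -> `|f y - f x| < eps.

Definition self_adjoint_XA (a : X -> A) := cont_XA a /\ forall x, star (a x) = a x.

Definition scalar_XA (b : X -> A) :=
  cont_XA b /\ forall x, exists z : C, b x = z *: 1.

Definition cX (f : X -> R) : X -> A := fun x => (f x)%:C%C *: 1.

(* supremum norm of C(X,A) (the sup of the empty family being 0) *)
Definition supnorm (a : X -> A) : \bar R :=
  ereal_sup ([set 0%E] `|` [set (cn (a x))%:E | x in [set: X]]).

Definition is_state (mu : (X -> A) -> C) :=
  [/\ forall a b, cont_XA a -> cont_XA b -> mu (fun x => a x + b x) = mu a + mu b,
      forall (z : C) a, cont_XA a -> mu (fun x => z *: a x) = z * mu a,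
      forall a, cont_XA a -> 0 <= mu (fun x => star (a x) * a x)
    & mu (fun _ => 1) = 1].

Definition lipA (N : A -> R) (a : X -> A) : \bar R :=
  ereal_sup ([set 0%E] `|`
    [set (N (a xy.1 - a xy.2) / d xy.1 xy.2)%:E | xy in [set xy : X * X | xy.1 <> xy.2]]).

Definition lipR (f : X -> R) : \bar R :=
  ereal_sup ([set 0%E] `|`
    [set (`|f xy.1 - f xy.2| / d xy.1 xy.2)%:E | xy in [set xy : X * X | xy.1 <> xy.2]]).

Inductive qchoice := q_CX | q_C | q_mu.

Definition Lq (N : A -> R) (mu : (X -> A) -> C) (q : qchoice) (a : X -> A)
  : \bar R :=
  let dev := match q with
    | q_CX => ereal_inf [set supnorm (fun x => a x - b x) | b in scalar_XA]
    | q_C => ereal_inf [set supnorm (fun x => a x - lam *: 1) | lam in [set: C]]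
    | q_mu => supnorm (fun x => a x - mu a *: 1)
    end in
  Order.max (lipA N a) dev.
End Defs.

From Pilot Require Import Defs.
From Stdlib Require List.
From mathcomp Require Import all_boot all_order all_algebra all_field.
From mathcomp Require Import all_classical all_reals.
From mathcomp Require Import constructive_ereal ereal.
From mathcomp.real_closed Require Import complex.
From mathcomp Require Import topology normedtype matrix_normedtype derive.
From mathcomp Require Import lra.
Import Order.TTheory GRing.Theory Num.Theory.
Import numFieldTopology.Exports numFieldNormedType.Exports.
Set Implicit Arguments.
Unset Strict Implicit.
Unset Printing Implicit Defensive.
Local Open Scope ring_scope.
Local Open Scope classical_set_scope.

(* All the seminorms are comparable to "Lipschitz constant for the C*-norm plus
   sup-distance to a constant lam 1" ([lip_near_const]).
   All norms on the finite-dimensional real space A are equivalent: a norm attains a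
   positive minimum on the compact unit sphere of coordinates.  The compact space X is
   bounded, so an l-Lipschitz a stays within l * diam X of a x0; this compares the distance
   to C(X, C1) with the distance to C1.  A state is bounded, |mu a| <= K sup cn a, so that
   |lam - mu a| = |mu (a - lam 1)| compares the distance to mu(a) 1 with the distance to C1.
   Boundedness of mu comes from positivity alone: |mu (f w^* w)| <= sup |f| mu (w^* w)
   because (M +- f) w^* w are squares, and every element of A is a combination of such
   w^* w (h = ((h+1)^2 - (h-1)^2)/4 for self-adjoint h, and e = h + i k in general).
   None of this uses self-adjointness of a.  For c_X, the N-Lipschitz constant of f 1 is
   N(1) times the Lipschitz constant of f. *)

Section RealNorm.
Variables (R : realType) (A : falgType R[i]) (N : A -> R).
Hypothesis HN : is_real_norm N.

Lemma rnorm0 : N 0 = 0.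
Proof.
by rewrite -(scale0r 0) -(rmorph0 (real_complex R)) (rnorm_scale HN) normr0 mul0r.
Qed.

Lemma rnormN a : N (- a) = N a.
Proof.
by rewrite -scaleN1r -(rmorphN1 (real_complex R)) (rnorm_scale HN) normrN normr1 mul1r.
Qed.

Lemma rnorm_ge0 a : 0 <= N a.
Proof.
have := rnorm_triangle HN a (- a); rewrite subrr rnorm0 rnormN => h; lra.
Qed.

Lemma rnorm_gt0 a : a != 0 -> 0 < N a.
Proof.
by move=> a0; rewrite lt0r rnorm_ge0 andbT; apply: contraNneq a0 => /(rnorm_eq0 HN) ->.
Qed.

Lemma rnorm_lerB a b : N a - N b <= N (a - b).
Proof. by have := rnorm_triangle HN (a - b) b; rewrite subrK => h; lra. Qed.

Lemma rnorm_sum (I : Type) (s : seq I) (F : I -> A) :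
  N (\sum_(i <- s) F i) <= \sum_(i <- s) N (F i).
Proof.
elim/big_rec2 : _ => [|i y1 y2 _ h]; first by rewrite rnorm0.
by apply: le_trans (rnorm_triangle HN _ _) _; rewrite lerD2l.
Qed.
End RealNorm.

Lemma lt_of_le_mul_lt_divD1 (R : realFieldType) (K e u v : R) : 0 <= K -> 0 < e ->
  u <= K * v -> v < e / (K + 1) -> u < e.
Proof.
move=> K0 e0 uKv ve; have K1 : 0 < K + 1 by rewrite ltr_wpDl.
have {ve} : v * (K + 1) < e by rewrite -ltr_pdivlMr.
nra.
Qed.

Lemma lipschitz_continuous (R : realType) (V : normedModType R) (F : V -> R) (K : R) :
  0 <= K -> (forall u v, F u - F v <= K * `|u - v|) -> continuous F.
Proof.
move=> K0 FK x; apply/cvgrPdist_lt => e e0.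
have eK : 0 < e / (K + 1) by rewrite divr_gt0 // ltr_wpDl.
near=> y; apply: (lt_of_le_mul_lt_divD1 K0 e0 (v := `|x - y|)).
  by rewrite ler_norml -opprB lerNl !opprB FK -(distrC y) FK.
by near: y; apply: cvgr_dist_lt.
Unshelve. all: end_near.
Qed.

(* [k] is the inverse of the minimum of [F] on the compact unit sphere. *)
Lemma rV_norm_dominated (R : realType) m (F : 'rV[R]_m -> R) (K : R) : 0 <= K ->
  (forall u v, F u - F v <= K * `|u - v|) ->
  (forall u, 0 <= F u) -> (forall u, F u = 0 -> u = 0) ->
  (forall r u, F (r *: u) = `|r| * F u) ->
  exists2 k, 0 < k & forall u, `|u| <= k * F u.
Proof.
move=> K0 FK F_ge0 F_eq0 FZ.
have [[u0 u0n0]|] := pselect (exists u : 'rV[R]_m, u != 0); last first.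
  move=> all0; exists 1 => // u.
  have -> : u = 0 by apply: contra_notP all0 => /eqP u0; exists u.
  by rewrite normr0 mul1r.
set S := [set u : 'rV[R]_m | `|u| = 1].
have normalizedS u : u != 0 -> S (`|u|^-1 *: u).
  by move=> un0; rewrite /S /= normrZ normrV ?unitfE ?normr_eq0 // normr_id mulVf ?normr_eq0.
have S_compact : compact S.
  apply: bounded_closed_compact.
    by rewrite /bounded_set /= /bounded_near; near=> M => x /= ->; near: M;
      apply: nbhs_pinfty_ge; rewrite num_real.
  apply: (@preimage_closed _ R (fun u : 'rV[R]_m => `|u|) [set 1]) => [x _|].
    exact: norm_continuous.
  exact: closed_eq.
have [c Sc cmin] := EVT_min_rV (ex_intro _ _ (normalizedS u0 u0n0)) S_compact
  (continuous_subspaceT (lipschitz_continuous K0 FK)).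
have Fc_gt0 : 0 < F c.
  rewrite lt0r F_ge0 andbT; apply/eqP => /F_eq0 c0.
  by move: Sc; rewrite inE /S /= c0 normr0 => /eqP; rewrite eq_sym oner_eq0.
exists (F c)^-1; first by rewrite invr_gt0.
move=> u; have [->|un0] := eqVneq u 0; first by rewrite normr0 mulr_ge0 ?F_ge0 ?invr_ge0 ?ltW.
have := cmin _ (mem_set (normalizedS u un0)).
rewrite FZ normrV ?unitfE ?normr_eq0 // normr_id ler_pdivlMl ?normr_gt0 //.
by rewrite ler_pdivlMl // mulrC.
Unshelve. all: end_near.
Qed.

Lemma mx_norm_coord_le (R : realDomainType) m n (u : 'M[R]_(m, n)) i j :
  `|u i j| <= `|u|.
Proof. by rewrite [`|u|]mx_normrE; apply/bigmax_geP; right; exists (i, j). Qed.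

Section RealCoordinates.
Variables (R : realType) (A : falgType R[i]).
Local Notation n := (\dim (@fullv _ A)).
Local Notation cbasis := (vbasis (@fullv _ A)).

Definition rbasis (j : 'I_(n + n)) : A :=
  match fintype.split j with inl i => cbasis`_i | inr i => 'i%C *: cbasis`_i end.

Definition rcomb (u : 'rV[R]_(n + n)) : A := \sum_j (u 0 j)%:C%C *: rbasis j.

Definition rcoord (v : A) : 'rV[R]_(n + n) :=
  \row_j match fintype.split j with
         | inl i => complex.Re (coord cbasis i v)
         | inr i => complex.Im (coord cbasis i v) end.

Lemma rcombE u : rcomb u =
  \sum_(i < n) ((u 0 (lshift n i))%:C%C + 'i%C * (u 0 (rshift n i))%:C%C) *: cbasis`_i.
Proof.
rewrite /rcomb big_split_ord /= -big_split /=; apply: eq_bigr => i _.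
by rewrite /rbasis (unsplitK (inl i)) (unsplitK (inr i)) scalerA scalerDl mulrC.
Qed.

Lemma rcoordK : cancel rcoord rcomb.
Proof.
move=> v; rewrite rcombE [RHS](coord_vbasis (memvf v)); apply: eq_bigr => i _.
rewrite !mxE (unsplitK (inl i)) (unsplitK (inr i)) /=.
by congr (_ *: _); case: (coord cbasis i v) => a b; apply/eqP; rewrite eq_complex /=; simpc.
Qed.

Lemma rcombB u w : rcomb (u - w) = rcomb u - rcomb w.
Proof. by rewrite /rcomb -sumrB; apply: eq_bigr => j _; rewrite !mxE rmorphB scalerBl. Qed.

Lemma rcombZ (r : R) u : rcomb (r *: u) = r%:C%C *: rcomb u.
Proof. by rewrite /rcomb scaler_sumr; apply: eq_bigr => j _; rewrite !mxE rmorphM scalerA. Qed.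

Lemma rcomb_eq0 u : rcomb u = 0 -> u = 0.
Proof.
rewrite rcombE => u0; apply/matrixP => a j; rewrite (ord1 a) mxE.
have coef0 i : (u 0 (lshift n i))%:C%C + 'i%C * (u 0 (rshift n i))%:C%C = 0.
  have := coord_sum_free (fun k => (u 0 (lshift n k))%:C%C + 'i%C * (u 0 (rshift n k))%:C%C)
    i (basis_free (vbasisP fullv)).
  by rewrite u0 linear0.
have coef_eq0 i : u 0 (lshift n i) = 0 /\ u 0 (rshift n i) = 0.
  move: (coef0 i); move: (u 0 _) (u 0 _) => x y /eqP.
  by rewrite eq_complex /=; simpc => /andP[/eqP -> /eqP ->].
by rewrite -(splitK j); case: (fintype.split j) => k /=; case: (coef_eq0 k).
Qed.

Lemma rcoordB v w : rcoord (v - w) = rcoord v - rcoord w.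
Proof.
apply/matrixP => a j; rewrite !mxE.
by case: (fintype.split j) => i; rewrite linearB /=;
  case: (coord cbasis i v) => ? ?; case: (coord cbasis i w).
Qed.

Variable N : A -> R.
Hypothesis HN : is_real_norm N.

Lemma rnorm_rcomb_le u : N (rcomb u) <= (\sum_j N (rbasis j)) * `|u|.
Proof.
apply: le_trans (rnorm_sum HN _ _) _; rewrite mulr_suml; apply: ler_sum => j _.
rewrite (rnorm_scale HN) mulrC ler_wpM2l ?(rnorm_ge0 HN) //; exact: mx_norm_coord_le.
Qed.

Lemma rnorm_rcomb_dominated :
  exists2 k, 0 < k & forall u : 'rV[R]_(n + n), `|u| <= k * N (rcomb u).
Proof.
apply: (@rV_norm_dominated R (n + n) (fun u => N (rcomb u)) (\sum_j N (rbasis j))).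
- by apply: sumr_ge0 => j _; apply: rnorm_ge0.
- by move=> u v; apply: le_trans (rnorm_lerB HN _ _) _; rewrite -rcombB rnorm_rcomb_le.
- by move=> u; apply: rnorm_ge0.
- by move=> u /(rnorm_eq0 HN) /rcomb_eq0.
- by move=> r u; rewrite rcombZ (rnorm_scale HN).
Qed.

Lemma rcoord_dominated : exists2 k, 0 < k & forall v j, `|rcoord v 0 j| <= k * N v.
Proof.
have [k k0 hk] := rnorm_rcomb_dominated; exists k => // v j.
by apply: le_trans (mx_norm_coord_le _ _ _) _; rewrite -{2}(rcoordK v).
Qed.
End RealCoordinates.

Lemma rnorm_equiv (R : realType) (A : falgType R[i]) (N1 N2 : A -> R) :
  is_real_norm N1 -> is_real_norm N2 -> exists2 K, 0 < K & forall v, N1 v <= K * N2 v.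
Proof.
move=> H1 H2; have [k k0 hk] := rnorm_rcomb_dominated H2.
set S := \sum_j N1 (rbasis j).
have S0 : 0 <= S by apply: sumr_ge0 => j _; apply: rnorm_ge0.
exists (S * k + 1); first by rewrite ltr_wpDl // mulr_ge0 // ltW.
move=> v; rewrite -{1}(rcoordK v); apply: le_trans (rnorm_rcomb_le H1 _) _.
apply: (@le_trans _ _ (S * (k * N2 v))); first by rewrite ler_wpM2l // -{2}(rcoordK v).
by rewrite mulrA mulrDl mul1r lerDl (rnorm_ge0 H2).
Qed.

Section CompactMetric.
Variables (R : realType) (X : Type) (d : X -> X -> R).
Hypotheses (Hd : is_metric d) (Hc : d_compact d).

Lemma metricxx x : d x x = 0.
Proof. exact/(Defs.metric_eq0 Hd). Qed.

Lemma metric_gt0 x y : x <> y -> 0 < d x y.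
Proof.
by move=> xy; rewrite lt0r (Defs.metric_ge0 Hd) // andbT; apply/eqP => /(Defs.metric_eq0 Hd).
Qed.

Lemma In_leq_foldr_maxn (s : list nat) k : List.In k s -> (k <= List.fold_right maxn 0 s)%N.
Proof.
elim: s => //= a s IH [->|/IH ks]; first by rewrite leq_maxl.
by rewrite (leq_trans ks) ?leq_maxr.
Qed.

(* Cover X by the open sets [h < k], k : nat. *)
Lemma usc_bounded (h : X -> R) :
  (forall x (k : R), h x < k -> exists2 r : R, 0 < r & forall y, d x y < r -> h y < k) ->
  exists M : R, forall x, h x <= M.
Proof.
move=> h_usc.
have [s hs] : exists s : list nat, forall x, exists i, List.In i s /\ h x < i%:R.
  apply: Hc => [k x /h_usc[r r0 hr]|x]; first by exists r.
  exists (Num.Def.archi_bound `|h x|).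
  exact: le_lt_trans (ler_norm _) (archi_boundP (normr_ge0 _)).
exists (List.fold_right maxn 0 s)%:R => x; have [k [ks hk]] := hs x.
by rewrite (le_trans (ltW hk)) // ler_nat In_leq_foldr_maxn.
Qed.

Lemma metric_bounded : exists2 D : R, 0 <= D & forall x y, d x y <= D.
Proof.
have [[x0]|noX] := pselect (inhabited X); last first.
  by exists 0 => // x; exfalso; exact: noX (inhabits x).
have [M hM] : exists M : R, forall x, d x0 x <= M.
  apply: usc_bounded => x k hk; exists (k - d x0 x); first by rewrite subr_gt0.
  by move=> y hy; have := Defs.metric_triangle Hd x0 x y; lra.
exists (M + M) => [|x y]; first by have := hM x0; rewrite metricxx; lra.
have := Defs.metric_triangle Hd x x0 y; rewrite (Defs.metric_sym Hd x x0).
by have := hM x; have := hM y; lra.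
Qed.
End CompactMetric.

Lemma normc_real (R : rcfType) (r : R) : `|r%:C%C| = `|r|%:C%C.
Proof. by rewrite normc_def /= expr0n /= addr0 sqrtr_sqr. Qed.

Lemma normc_Normc (R : rcfType) (z : R[i]) : `|z| = (Normc.normc z)%:C%C.
Proof. by case: z. Qed.

Lemma normc_ge0 (R : rcfType) (z : R[i]) : 0 <= Normc.normc z.
Proof. by rewrite -ler0c -normc_Normc. Qed.

Section CstarAlgebra.
Variables (R : realType) (A : falgType R[i]) (star : A -> A) (cn : A -> R).
Hypothesis HC : is_cstar star cn.

Lemma cnZ z a : cn (z *: a) = Normc.normc z * cn a.
Proof. by apply: complexI; rewrite (cn_scale HC) normc_Normc rmorphM. Qed.

Lemma cstar_real_norm : is_real_norm cn.
Proof.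
split=> [||r a]; [exact: (cn_eq0 HC) | exact: (cn_triangle HC) |].
by rewrite cnZ; congr (_ * _); apply: complexI; rewrite -normc_Normc normc_real.
Qed.

Lemma cn1_gt0 : 0 < cn 1.
Proof. by rewrite (rnorm_gt0 cstar_real_norm) ?oner_neq0. Qed.

Lemma starB a b : star (a - b) = star a - star b.
Proof.
have star0 : star 0 = 0 by apply/(addrI (star 0)); rewrite -(star_add HC) !addr0.
have starN c : star (- c) = - star c.
  by apply/(addrI (star c)); rewrite -(star_add HC) !subrr.
by rewrite (star_add HC) starN.
Qed.

Lemma star1 : star 1 = 1.
Proof. by have := star_mul HC (star 1) 1; rewrite mulr1 !(star_invol HC) mulr1 => <-. Qed.

Lemma starZr (r : R) a : star (r%:C%C *: a) = r%:C%C *: star a.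
Proof. by rewrite (star_scale HC) conjc_real. Qed.
End CstarAlgebra.

Lemma lerB_sqrtr_dist (R : rcfType) (a b : R) : 0 <= a -> 0 <= b ->
  `|Num.sqrt a - Num.sqrt b| <= Num.sqrt `|a - b|.
Proof.
wlog ba : a b / b <= a => [wlog_ba a0 b0|a0 b0].
  case: (leP b a) => [ba|/ltW ab]; first exact: wlog_ba.
  by rewrite distrC (distrC a); exact: wlog_ba.
have sb := sqrtr_ge0 b; have sab := sqrtr_ge0 `|a - b|.
rewrite ger0_norm ?subr_ge0 ?ler_sqrt // lerBlDl.
rewrite -(@ler_pXn2r _ 2) ?nnegrE ?addr_ge0 ?sqrtr_ge0 //.
rewrite sqrrD !sqr_sqrtr ?normr_ge0 // ger0_norm ?subr_ge0 //.
have : 0 <= Num.sqrt b * Num.sqrt (a - b) *+ 2 by rewrite mulrn_wge0 // mulr_ge0 ?sqrtr_ge0.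
lra.
Qed.

Lemma normr_le_pm (C : numDomainType) (c z : C) : 0 <= c + z -> 0 <= c - z -> `|z| <= c.
Proof.
move=> cDz cBz; have c0 : 0 <= c.
  by have := addr_ge0 cDz cBz; rewrite addrACA subrr addr0 -mulr2n pmulrn_lge0.
have zr : z \is Num.real by rewrite -(addKr c z) rpredD ?rpredN ?ger0_real.
rewrite real_ler_norml //; apply/andP; split; last by rewrite -subr_ge0.
by rewrite -subr_ge0 opprK addrC.
Qed.

Lemma ge0_complex_real (R : rcfType) (z : R[i]) : 0 <= z -> exists2 c : R, 0 <= c & z = c%:C%C.
Proof.
move=> z0; have zr : z \is Num.real by rewrite ger0_real.
by exists (complex.Re z); rewrite ?RRe_real // -lecR RRe_real.
Qed.

Lemma subr_sqrD1B1 (V : pzRingType) (h : V) : (h + 1) ^+ 2 - (h - 1) ^+ 2 = h *+ 4.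
Proof.
rewrite sqrrD1 sqrrB1 opprD opprB addrACA subrr addr0 [h ^+ 2 + _]addrC.
by rewrite addrACA subrr addr0 -mulrnDr.
Qed.

Section ContinuousFunctions.
Variables (R : realType) (X : Type) (d : X -> X -> R) (A : falgType R[i])
  (star : A -> A) (cn : A -> R).
Hypothesis HC : is_cstar star cn.
Local Notation cont := (cont_XA d cn).

Lemma cont_XA_of_le (b : X -> A) (g : X -> X -> R) (K : R) : 0 <= K ->
  (forall x eps, 0 < eps -> exists2 del : R, 0 < del & forall y, d x y < del -> g x y < eps) ->
  (forall x y, cn (b y - b x) <= K * g x y) -> cont b.
Proof.
move=> K0 g_cont bg x eps e0.
have [del del0 hdel] := g_cont x _ (divr_gt0 e0 (ltr_wpDl K0 ltr01)).
by exists del => // y /hdel; apply: lt_of_le_mul_lt_divD1 K0 e0 (bg x y).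
Qed.

Lemma cont_XA_cst c : cont (fun _ => c).
Proof. by move=> x eps e0; exists 1 => // y _; rewrite subrr (rnorm0 (cstar_real_norm HC)). Qed.

Lemma cont_XA_add a b : cont a -> cont b -> cont (fun x => a x + b x).
Proof.
move=> ca cb x eps e0; have e2 : 0 < eps / 2 by rewrite divr_gt0.
have [da da0 hda] := ca x _ e2; have [db db0 hdb] := cb x _ e2.
exists (Num.min da db) => [|y]; first by rewrite lt_min da0 db0.
rewrite lt_min => /andP[/hda ha /hdb hb]; rewrite opprD addrACA.
by apply: le_lt_trans (cn_triangle HC _ _) _; rewrite [eps]splitr ltrD.
Qed.

Lemma cont_XA_scale z a : cont a -> cont (fun x => z *: a x).
Proof.
move=> ca; apply: (cont_XA_of_le (normc_ge0 z) ca) => x y.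
by rewrite -scalerBr (cnZ HC).
Qed.

Lemma cont_XA_sub a b : cont a -> cont b -> cont (fun x => a x - b x).
Proof.
move=> ca cb; have := cont_XA_add ca (cont_XA_scale (-1) cb).
by under eq_fun do rewrite scaleN1r.
Qed.

Lemma cont_XA_Rscale (f : X -> R) e : cont_XR d f -> cont (fun x => (f x)%:C%C *: e).
Proof.
move=> cf; apply: (cont_XA_of_le (rnorm_ge0 (cstar_real_norm HC) e) cf) => x y.
by rewrite -scalerBl -rmorphB (rnorm_scale (cstar_real_norm HC)) mulrC.
Qed.

Lemma cont_XA_sum (I : Type) (s : seq I) (F : I -> X -> A) :
  (forall i, cont (F i)) -> cont (fun x => \sum_(i <- s) F i x).
Proof.
move=> cF; elim: s => [|i s IH].
  by under eq_fun do rewrite big_nil; apply: cont_XA_cst.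
by under eq_fun do rewrite big_cons; apply: cont_XA_add.
Qed.

Lemma cont_XR_sqrt (f : X -> R) : (forall x, 0 <= f x) -> cont_XR d f ->
  cont_XR d (fun x => Num.sqrt (f x)).
Proof.
move=> f0 cf x eps e0; have [del del0 hdel] := cf x _ (mulr_gt0 e0 e0).
exists del => // y /hdel h; apply: le_lt_trans (lerB_sqrtr_dist (f0 y) (f0 x)) _.
have -> : eps = Num.sqrt (eps ^+ 2) by rewrite sqrtr_sqr gtr0_norm.
by rewrite ltr_sqrt ?exprn_gt0 // expr2.
Qed.
End ContinuousFunctions.

Section State.
Variables (R : realType) (X : Type) (d : X -> X -> R) (A : falgType R[i])
  (star : A -> A) (cn : A -> R) (mu : (X -> A) -> R[i]).
Hypotheses (HC : is_cstar star cn) (Hmu : is_state d star cn mu).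
Local Notation cont := (cont_XA d cn).

Lemma state_ext f g : (forall x, f x = g x) -> mu f = mu g.
Proof. by move=> fg; congr mu; apply: funext. Qed.

Lemma stateD a b : cont a -> cont b -> mu (fun x => a x + b x) = mu a + mu b.
Proof. by case: Hmu => + _ _ _; apply. Qed.

Lemma stateZ z a : cont a -> mu (fun x => z *: a x) = z * mu a.
Proof. by case: Hmu => _ + _ _; apply. Qed.

Lemma state_ge0 a : cont a -> 0 <= mu (fun x => star (a x) * a x).
Proof. by case: Hmu => _ _ + _; apply. Qed.

Lemma state_cst z : mu (fun _ => z *: 1) = z.
Proof. by case: Hmu => _ _ _ mu1; rewrite (stateZ z (cont_XA_cst d HC 1)) mu1 mulr1. Qed.

Lemma stateB a b : cont a -> cont b -> mu (fun x => a x - b x) = mu a - mu b.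
Proof.
move=> ca cb; rewrite -mulN1r -(stateZ (-1) cb) -(stateD ca (cont_XA_scale HC (-1) cb)).
by apply: state_ext => x; rewrite scaleN1r.
Qed.

Lemma state_sum (I : Type) (s : seq I) (F : I -> X -> A) : (forall i, cont (F i)) ->
  mu (fun x => \sum_(i <- s) F i x) = \sum_(i <- s) mu (F i).
Proof.
move=> cF; elim: s => [|i s IH].
  by rewrite big_nil -(state_cst 0); apply: state_ext => x; rewrite big_nil scale0r.
rewrite big_cons -IH -(stateD (cF i) (cont_XA_sum HC _ cF)).
by apply: state_ext => x; rewrite big_cons.
Qed.

Lemma state_inhabited : inhabited X.
Proof.
apply: contrapT => noX; have := state_cst 1.
have -> : (fun _ : X => 1 *: 1 : A) = (fun _ => 0 *: 1).
  by apply: funext => x; case: noX; exact: inhabits x.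
by rewrite state_cst => /eqP; rewrite eq_sym oner_eq0.
Qed.

Definition weight_bound (a : A) (c : R) := forall (f : X -> R) (M : R),
  cont_XR d f -> (forall x, `|f x| <= M) -> `|mu (fun x => (f x)%:C%C *: a)| <= (M * c)%:C%C.

Lemma weight_boundD a b ca cb :
  weight_bound a ca -> weight_bound b cb -> weight_bound (a + b) (ca + cb).
Proof.
move=> hca hcb f M cf fM.
rewrite (@state_ext _ (fun x => (f x)%:C%C *: a + (f x)%:C%C *: b)) => [|x]; last exact: scalerDr.
rewrite (stateD (cont_XA_Rscale HC a cf) (cont_XA_Rscale HC b cf)) mulrDr rmorphD.
by apply: le_trans (ler_normD _ _) _; rewrite lerD ?hca ?hcb.
Qed.

Lemma weight_boundZ z a c : weight_bound a c -> weight_bound (z *: a) (Normc.normc z * c).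
Proof.
move=> hc f M cf fM.
rewrite (@state_ext _ (fun x => z *: ((f x)%:C%C *: a))) => [|x]; last by rewrite !scalerA mulrC.
rewrite (stateZ _ (cont_XA_Rscale HC a cf)) normrM normc_Normc mulrCA rmorphM.
by rewrite ler_wpM2l ?ler0c ?normc_ge0 ?hc.
Qed.

(* Positivity of [mu] on the squares [(sqrt (M +- f) w)^* (sqrt (M +- f) w)]. *)
Lemma weight_bound_pos w c : mu (fun _ => star w * w) = c%:C%C -> weight_bound (star w * w) c.
Proof.
set P := star w * w => muP f M cf fM.
have cfP : cont (fun x => (f x)%:C%C *: P) := cont_XA_Rscale HC P cf.
have pm_ge0 s : `|s| = 1 -> 0 <= M%:C%C * c%:C%C + s%:C%C * mu (fun x => (f x)%:C%C *: P).
  move=> s1; have Msf_ge0 x : 0 <= M + s * f x.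
    by have := fM x; have := ler_norm (- (s * f x)); rewrite normrN normrM s1 mul1r; lra.
  have cg : cont_XR d (fun x => Num.sqrt (M + s * f x)).
    apply: cont_XR_sqrt => // x eps e0; have [del del0 hdel] := cf x eps e0.
    by exists del => // y /hdel; rewrite opprD addrACA subrr add0r -mulrBr normrM s1 mul1r.
  have := state_ge0 (cont_XA_Rscale HC w cg).
  rewrite (@state_ext _ (fun x => M%:C%C *: P + s%:C%C *: ((f x)%:C%C *: P))) => [|x].
    rewrite (stateD (cont_XA_cst d HC (M%:C%C *: P)) (cont_XA_scale HC s%:C%C cfP)).
    by rewrite (stateZ _ cfP) -muP -(stateZ _ (cont_XA_cst d HC P)); apply: id.
  rewrite /= (starZr HC) -scalerAl -scalerAr scalerA -rmorphM -expr2 sqr_sqrtr //.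
  by rewrite rmorphD rmorphM scalerDl scalerA.
rewrite rmorphM; apply: normr_le_pm; first by have := pm_ge0 1 (normr1 _); rewrite rmorph1 mul1r.
by have := pm_ge0 (-1); rewrite normrN normr1 rmorphN1 mulN1r; apply.
Qed.

Lemma weight_bound_sa h : star h = h -> exists c, 0 <= c /\ weight_bound h c.
Proof.
move=> sh; have pos_bound w : exists c, 0 <= c /\ weight_bound (star w * w) c.
  have [c c0 muP] : exists2 c, 0 <= c & mu (fun _ => star w * w) = c%:C%C.
    exact: ge0_complex_real (state_ge0 (cont_XA_cst d HC w)).
  by exists c; split; last exact: weight_bound_pos.
have [cp [cp0 hp]] := pos_bound (h + 1); have [cm [cm0 hm]] := pos_bound (h - 1).
have -> : h = 4^-1 *: (star (h + 1) * (h + 1)) + (- 4^-1) *: (star (h - 1) * (h - 1)).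
  rewrite scaleNr -scalerBr (star_add HC) (starB HC) sh (star1 HC) -!expr2 subr_sqrD1B1.
  by rewrite -scalerMnr scalerMnl -mulr_natr mulVf ?pnatr_eq0 // scale1r.
eexists; split; last by apply: weight_boundD; apply: weight_boundZ; [exact: hp | exact: hm].
by rewrite addr_ge0 // mulr_ge0 // normc_ge0.
Qed.

Lemma weight_bound_exists e : exists c, 0 <= c /\ weight_bound e c.
Proof.
set h := (2^-1 : R)%:C%C *: (e + star e).
set k := (2^-1 : R)%:C%C *: ('i%C *: (star e - e)).
have sh : star h = h by rewrite /h (starZr HC) (star_add HC) (star_invol HC) addrC.
have sk : star k = k.
  have conj_i : conjc ('i%C : R[i]) = - 'i%C by apply/eqP; rewrite eq_complex /= oppr0 !eqxx.
  rewrite /k (starZr HC) (star_scale HC) conj_i (starB HC) (star_invol HC).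
  by rewrite scaleNr -scalerN opprB.
have -> : e = h + 'i%C *: k.
  rewrite /h /k !scalerA mulrAC -expr2 sqr_i mulN1r scaleNr -scalerN opprB.
  rewrite -scalerDr addrACA subrr addr0 -mulr2n -scalerMnr scalerMnl -mulr_natr.
  by rewrite -(rmorph_nat (real_complex R) 2) -rmorphM mulVf ?pnatr_eq0 // rmorph1 scale1r.
have [ch [ch0 hh]] := weight_bound_sa sh; have [ck [ck0 hk]] := weight_bound_sa sk.
eexists; split; last by apply: weight_boundD hh (weight_boundZ _ hk).
by rewrite addr_ge0 // mulr_ge0 // normc_ge0.
Qed.

(* Expand [g] in the real basis [rbasis] and bound each coordinate separately. *)
Lemma state_bounded : exists2 K : R, 0 < K & forall g t, cont g ->
  (forall x, cn (g x) <= t) -> `|mu g| <= (K * t)%:C%C.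
Proof.
have [k k0 hk] := rcoord_dominated (cstar_real_norm HC).
have [c hc] := choice (fun j => weight_bound_exists (rbasis j)).
set S := \sum_j c j.
have S0 : 0 <= S by apply: sumr_ge0 => j _; case: (hc j).
exists (k * S + 1) => [|g t cg gt]; first by rewrite ltr_wpDl // mulr_ge0 // ltW.
have [x0] := state_inhabited.
have t0 : 0 <= t := le_trans (rnorm_ge0 (cstar_real_norm HC) _) (gt x0).
have coord_cont j : cont_XR d (fun x => rcoord (g x) 0 j).
  move=> x eps e0; have [del del0 hdel] := cg x _ (divr_gt0 e0 k0).
  exists del => // y /hdel gyx.
  have -> : rcoord (g y) 0 j - rcoord (g x) 0 j = rcoord (g y - g x) 0 j.
    by rewrite rcoordB !mxE.
  by apply: le_lt_trans (hk _ _) _; rewrite -ltr_pdivlMl // mulrC.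
rewrite (@state_ext g (fun x => \sum_j (rcoord (g x) 0 j)%:C%C *: rbasis j)) => [|x]; last first.
  by rewrite -[LHS]rcoordK.
rewrite state_sum => [|j]; last exact (cont_XA_Rscale HC (rbasis j) (coord_cont j)).
apply: le_trans (ler_norm_sum _ _ _) _.
apply: (@le_trans _ _ (\sum_j ((k * t) * c j)%:C%C)).
  apply: ler_sum => j _; case: (hc j) => _; apply=> [|x]; first exact: coord_cont.
  by apply: le_trans (hk _ _) _; rewrite ler_pM2l.
by rewrite -rmorph_sum lecR -mulr_sumr mulrDl mul1r mulrAC lerDl.
Qed.
End State.

Section ExtendedReals.
Variable R : realType.

Lemma lee_pmul_of_lt (x y : \bar R) (K : R) : 0 < K -> (0 <= y)%E ->
  (forall t : R, (y < t%:E)%E -> (x <= (K * t)%:E)%E) -> (x <= K%:E * y)%E.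
Proof.
move=> K0 + xK; case: y xK => [r| |] //= xK y0; last by rewrite mulry gtr0_sg // mul1e leey.
have : (x <= (K * (r + 1))%:E)%E by apply: xK; rewrite lte_fin ltrDl.
case: x {y0} xK => [s xK _| //|_ _]; last exact: leNye.
rewrite -EFinM lee_fin; apply/ler_addgt0Pr => e e0.
have := xK (r + e / K); rewrite lte_fin ltrDl divr_gt0 // lee_fin => /(_ isT).
by rewrite mulrDr mulrCA mulfV ?gt_eqF // mulr1.
Qed.

Lemma sup0U_le (S : set \bar R) (t : R) : 0 <= t -> (forall z, S z -> (z <= t%:E)%E) ->
  (ereal_sup ([set 0%E] `|` S) <= t%:E)%E.
Proof. by move=> t0 St; apply/ereal_supP => z [->|/St //]; rewrite lee_fin. Qed.

Lemma sup0U_lt (S : set \bar R) (t : \bar R) z : (ereal_sup ([set 0%E] `|` S) < t)%E ->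
  S z -> (z < t)%E.
Proof. by move=> St Sz; apply: le_lt_trans St; apply: ereal_sup_ubound; right. Qed.

Lemma sup0U_ge0 (S : set \bar R) : (0 <= ereal_sup ([set 0%E] `|` S))%E.
Proof. by apply: ereal_sup_ubound; left. Qed.
End ExtendedReals.

Section LipschitzSeminorms.
Variables (R : realType) (X : Type) (d : X -> X -> R) (A : falgType R[i])
  (star : A -> A) (cn : A -> R) (mu : (X -> A) -> R[i]).
Hypotheses (Hd : is_metric d) (Hc : d_compact d).
Hypotheses (HC : is_cstar star cn) (Hmu : is_state d star cn mu).
Local Notation cont := (cont_XA d cn).

Lemma lipA_lt_lipschitz (N : A -> R) a (t : R) : is_real_norm N ->
  (lipA d N a < t%:E)%E -> forall x y, N (a x - a y) <= t * d x y.
Proof.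
move=> HN lip_a x y; have [->|xy] := pselect (x = y).
  by rewrite subrr (rnorm0 HN) (metricxx Hd) mulr0.
have := sup0U_lt lip_a (z := (N (a x - a y) / d x y)%:E).
rewrite lte_fin ltr_pdivrMr ?(metric_gt0 Hd xy) // => /(_ _)/ltW; apply.
by exists (x, y).
Qed.

Lemma lipA_le_lipschitz (N : A -> R) a (t : R) : 0 <= t ->
  (forall x y, N (a x - a y) <= t * d x y) -> (lipA d N a <= t%:E)%E.
Proof.
move=> t0 lip_a; apply: sup0U_le => // z [[x y] /= xy <-].
by rewrite lee_fin ler_pdivrMr ?(metric_gt0 Hd xy) // lip_a.
Qed.

Lemma lipR_lt_lipschitz (f : X -> R) (t : R) :
  (lipR d f < t%:E)%E -> forall x y, `|f x - f y| <= t * d x y.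
Proof.
move=> lip_f x y; have [->|xy] := pselect (x = y).
  by rewrite subrr normr0 (metricxx Hd) mulr0.
have := sup0U_lt lip_f (z := (`|f x - f y| / d x y)%:E).
rewrite lte_fin ltr_pdivrMr ?(metric_gt0 Hd xy) // => /(_ _)/ltW; apply.
by exists (x, y).
Qed.

Lemma lipR_le_lipschitz (f : X -> R) (t : R) : 0 <= t ->
  (forall x y, `|f x - f y| <= t * d x y) -> (lipR d f <= t%:E)%E.
Proof.
move=> t0 lip_f; apply: sup0U_le => // z [[x y] /= xy <-].
by rewrite lee_fin ler_pdivrMr ?(metric_gt0 Hd xy) // lip_f.
Qed.

Lemma supnorm_lt_bound (a : X -> A) (t : R) :
  (supnorm cn a < t%:E)%E -> forall x, cn (a x) <= t.
Proof.
move=> at_ x; have := sup0U_lt at_ (z := (cn (a x))%:E).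
by rewrite lte_fin => /(_ _)/ltW; apply; exists x.
Qed.

Lemma supnorm_le_bound (a : X -> A) (t : R) : 0 <= t -> (forall x, cn (a x) <= t) ->
  (supnorm cn a <= t%:E)%E.
Proof. by move=> t0 at_; apply: sup0U_le => // z [x _ <-]; rewrite lee_fin. Qed.

Lemma Lq_ge0 (N : A -> R) q a : (0 <= Lq d cn N mu q a)%E.
Proof. by rewrite /Lq le_max sup0U_ge0. Qed.

(* A common currency for all the seminorms [Lq]. *)
Definition lip_near_const (a : X -> A) (l s : R) :=
  (forall x y, cn (a x - a y) <= l * d x y) /\
  exists lam : R[i], forall x, cn (a x - lam *: 1) <= s.

Lemma lip_near_const_le a l s l' s' :
  lip_near_const a l s -> l <= l' -> s <= s' -> lip_near_const a l' s'.
Proof.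
move=> [lip_a [lam a_lam]] ll' ss'; split=> [x y|].
  by rewrite (le_trans (lip_a x y)) // ler_wpM2r ?(Defs.metric_ge0 Hd).
by exists lam => x; rewrite (le_trans (a_lam x)).
Qed.

(* For [q = q_CX] the diameter of [X] turns the distance to [C(X, C1)] into one to [C1]. *)
Lemma Lq_lt_lip_near_const (N : A -> R) q : is_real_norm N -> exists2 K : R, 0 < K &
  forall a, cont a -> forall t : R, (Lq d cn N mu q a < t%:E)%E ->
    lip_near_const a (K * t) (K * t).
Proof.
move=> HN; have [kN kN0 cn_le] := rnorm_equiv (cstar_real_norm HC) HN.
have [D D0 dD] := metric_bounded Hd Hc.
have [x0] := state_inhabited HC Hmu.
exists (kN * (D + 1) + 1) => [|a ca t]; first by nra.
rewrite /Lq gt_max => /andP[lip_a dev_a].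
have t0 : 0 < t by rewrite -lte_fin (le_lt_trans (sup0U_ge0 _) lip_a).
have lip_cn x y : cn (a x - a y) <= kN * t * d x y.
  rewrite -mulrA; apply: le_trans (cn_le _) _.
  by rewrite ler_pM2l // (lipA_lt_lipschitz HN lip_a).
have Kt_ge : kN * t * D + t <= (kN * (D + 1) + 1) * t by nra.
split=> [x y|].
  by rewrite (le_trans (lip_cn x y)) // ler_wpM2r ?(Defs.metric_ge0 Hd) //; nra.
case: q dev_a => /= dev_a.
- have [_ [b [cb b_scalar] <-] ab] := ereal_inf_lt dev_a.
  have [lam b_x0] := b_scalar x0; exists lam => x; apply: le_trans Kt_ge.
  rewrite -b_x0 -(subrK (a x0) (a x)) -addrA.
  apply: le_trans (cn_triangle HC _ _) _; apply: lerD; last exact: supnorm_lt_bound ab x0.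
  by rewrite (le_trans (lip_cn x x0)) // ler_pM2l ?dD // mulr_gt0.
- have [_ [lam _ <-] alam] := ereal_inf_lt dev_a.
  by exists lam => x; rewrite (le_trans (supnorm_lt_bound alam x)) //; nra.
- by exists (mu a) => x; rewrite (le_trans (supnorm_lt_bound dev_a x)) //; nra.
Qed.

(* For [q = q_mu] the boundedness of the state gives [|lam - mu a| <= K s]. *)
Lemma lip_near_const_Lq_le (N : A -> R) q : is_real_norm N -> exists2 K : R, 0 < K &
  forall a, cont a -> forall t : R, 0 <= t -> lip_near_const a t t ->
    (Lq d cn N mu q a <= (K * t)%:E)%E.
Proof.
move=> HN; have [kN kN0 N_le] := rnorm_equiv HN (cstar_real_norm HC).
have [Km Km0 mu_le] := state_bounded HC Hmu.
have c10 := cn1_gt0 HC.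
set K := kN + 1 + Km * cn 1.
have Kmc : 0 <= Km * cn 1 by rewrite mulr_ge0 // ltW.
have K1 : 1 <= K by rewrite /K; lra.
exists K => [|a ca t t0 [lip_a [lam a_lam]]]; first exact: lt_le_trans K1.
have K0 : 0 <= K * t by rewrite mulr_ge0 // (le_trans ler01 K1).
have t_le : t <= K * t by rewrite ler_peMl.
rewrite /Lq ge_max; apply/andP; split.
  apply: lipA_le_lipschitz => // x y; apply: le_trans (N_le _) _.
  have := lip_a x y; have := Defs.metric_ge0 Hd x y.
  have := rnorm_ge0 (cstar_real_norm HC) (a x - a y).
  rewrite /K; nra.
have dev_le : (supnorm cn (fun x => (a x - lam *: 1)%R) <= (K * t)%:E)%E.
  by apply: supnorm_le_bound => // x; apply: le_trans (a_lam x) t_le.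
case: q => /=.
- apply: le_trans (ereal_inf_lbound _) dev_le.
  by exists (fun _ => lam *: 1) => //; split; [exact (cont_XA_cst d HC _) | exists lam].
- by apply: le_trans (ereal_inf_lbound _) dev_le; exists lam.
apply: supnorm_le_bound => // x.
have c_lam : cont (fun x => a x - lam *: 1) := cont_XA_sub HC ca (cont_XA_cst d HC _).
have lam_mu : Normc.normc (lam - mu a) <= Km * t.
  have := mu_le _ t c_lam a_lam.
  by rewrite (stateB HC Hmu ca (cont_XA_cst d HC _)) (state_cst HC Hmu) distrC normc_Normc lecR.
rewrite -(subrK (lam *: 1) (a x)) -addrA -scalerBl.
apply: le_trans (cn_triangle HC _ _) _; rewrite (cnZ HC).
have := a_lam x; have := ler_wpM2r (ltW c10) lam_mu; have := normc_ge0 (lam - mu a).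
rewrite /K; nra.
Qed.

Lemma Lq_le_Lq (N1 N2 : A -> R) q1 q2 : is_real_norm N1 -> is_real_norm N2 ->
  exists2 K : R, 0 < K & forall a, cont a ->
    (Lq d cn N2 mu q2 a <= K%:E * Lq d cn N1 mu q1 a)%E.
Proof.
move=> H1 H2; have [Ka Ka0 Lq1_lt] := Lq_lt_lip_near_const q1 H1.
have [Kb Kb0 Lq2_le] := lip_near_const_Lq_le q2 H2.
exists (Kb * Ka) => [|a ca]; first by rewrite mulr_gt0.
apply: lee_pmul_of_lt; [by rewrite mulr_gt0 | exact: Lq_ge0 | move=> t Lq1_t].
have t0 : 0 < t by rewrite -lte_fin (le_lt_trans (Lq_ge0 _ _ _) Lq1_t).
rewrite -mulrA; exact: Lq2_le ca _ (mulr_ge0 (ltW Ka0) (ltW t0)) (Lq1_lt a ca t Lq1_t).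
Qed.

Lemma cXB (f : X -> R) x y : cX A f x - cX A f y = (f x - f y)%:C%C *: 1.
Proof. by rewrite /cX -scalerBl -rmorphB. Qed.

Lemma Lq_cX_le_lipR (N : A -> R) q : is_real_norm N -> exists2 K : R, 0 < K &
  forall f, cont_XR d f -> (Lq d cn N mu q (cX A f) <= K%:E * lipR d f)%E.
Proof.
move=> HN; have [Kb Kb0 Lq_le] := lip_near_const_Lq_le q HN.
have [D D0 dD] := metric_bounded Hd Hc.
have [x0] := state_inhabited HC Hmu.
have c10 := cn1_gt0 HC.
set K0 := cn 1 * (D + 1).
have K00 : 0 < K0 by rewrite mulr_gt0 // ltr_wpDl.
exists (Kb * K0) => [|f cf]; first by rewrite mulr_gt0.
apply: lee_pmul_of_lt; [by rewrite mulr_gt0 | exact: sup0U_ge0 | move=> t lipR_t].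
have t0 : 0 < t by rewrite -lte_fin (le_lt_trans (sup0U_ge0 _) lipR_t).
have lip_f := lipR_lt_lipschitz lipR_t.
have cn_cX x y : cn (cX A f x - cX A f y) = `|f x - f y| * cn 1.
  by rewrite cXB (rnorm_scale (cstar_real_norm HC)).
have cXf : cont (cX A f) := cont_XA_Rscale HC 1 cf.
rewrite -mulrA; apply: (Lq_le _ cXf); first by rewrite mulr_ge0 ?ltW.
apply: (@lip_near_const_le _ (cn 1 * t) (cn 1 * (t * D))); first split=> [x y|].
- by rewrite cn_cX mulrC -mulrA ler_pM2l // lip_f.
- exists (f x0)%:C%C => x; rewrite -[_ *: 1]/(cX A f x0) cn_cX mulrC ler_pM2l //.
  by rewrite (le_trans (lip_f x x0)) // ler_pM2l.
- by rewrite /K0 -mulrA ler_pM2l //; nra.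
- by rewrite /K0 -!mulrA ler_pM2l //; nra.
Qed.

Lemma lipR_le_Lq_cX (N : A -> R) q : is_real_norm N -> exists2 c : R, 0 < c &
  forall f, cont_XR d f -> (c%:E * lipR d f <= Lq d cn N mu q (cX A f))%E.
Proof.
move=> HN; have N1 : 0 < N 1 by rewrite (rnorm_gt0 HN) ?oner_neq0.
exists (N 1) => // f cf; rewrite -[N 1]invrK lee_pdivrMl ?invr_gt0 //.
apply: lee_pmul_of_lt; [by rewrite invr_gt0 | exact: Lq_ge0 | move=> t].
rewrite /Lq gt_max => /andP[lip_cXf _].
have t0 : 0 < t by rewrite -lte_fin (le_lt_trans (sup0U_ge0 _) lip_cXf).
apply: lipR_le_lipschitz => [|x y]; first by rewrite mulr_ge0 ?invr_ge0 ?ltW.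
have := lipA_lt_lipschitz HN lip_cXf x y.
by rewrite cXB (rnorm_scale HN) -mulrA ler_pdivlMl // mulrC.
Qed.
End LipschitzSeminorms.

Theorem proposition2p15 (R : realType) (X : Type) (d : X -> X -> R)
  (A : falgType R[i]) (star : A -> A) (cn : A -> R)
  (mu : (X -> A) -> R[i]) (Nn Nm : A -> R) (q p : qchoice) :
  compact_metric_space d ->
  is_cstar star cn ->
  is_state d star cn mu ->
  is_real_norm Nn -> is_real_norm Nm ->
  (exists c Cc : R, [/\ 0 < c, 0 < Cc &
     forall a : X -> A, self_adjoint_XA d star cn a ->
       (c%:E * Lq d cn Nn mu q a <= Lq d cn Nm mu p a)%E /\
       (Lq d cn Nm mu p a <= Cc%:E * Lq d cn Nn mu q a)%E]) /\
  (exists c' C' : R, [/\ 0 < c', 0 < C' &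
     forall f : X -> R, cont_XR d f ->
       (c'%:E * lipR d f <= Lq d cn Nn mu q (cX A f))%E /\
       (Lq d cn Nn mu q (cX A f) <= C'%:E * lipR d f)%E]).
Proof.
move=> [Hd Hc] HC Hmu Hn Hm; split.
  have [K1 K1_gt0 Lqp_le] := Lq_le_Lq Hd Hc HC Hmu q p Hn Hm.
  have [K2 K2_gt0 Lqq_le] := Lq_le_Lq Hd Hc HC Hmu p q Hm Hn.
  exists K2^-1, K1; split=> [||a [ca _]]; rewrite ?invr_gt0 //.
  by rewrite lee_pdivrMl // Lqq_le // Lqp_le.
have [c c_gt0 lipR_le] := lipR_le_Lq_cX cn mu Hd q Hn.
have [C C_gt0 Lq_le] := Lq_cX_le_lipR Hd Hc HC Hmu q Hn.
by exists c, C; split=> // f cf; rewrite lipR_le // Lq_le.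
Qed.
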